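(* Let $\mathcal P$ be a bloom class of continua all of whose elements are coastal. Then every $X\in\mathcal P$ is irreducible about its set of non-block points, i.e. no proper subcontinuum of $X$ contains all non-block points of $X$.
   Context: A continuum is a nondegenerate compact connected Hausdorff space. For a subcontinuum $K\subset X$, the $K$-bloom is the canonical quotient map $X\to X/K$ collapsing $K$ to a point; a class $\mathcal P$ of continua is a bloom class if $X/K\in\mathcal P$ whenever $X\in\mathcal P$ and $K$ is a subcontinuum of $X$ (with $X/K$ a continuum). $\kappa(x;p)$ denotes the union of all subcontinua $M\neq X$ of $X$ with $x\in M$ and $p\notin M$; $X$ is coastal if for every $x\in X$ some $p\neq x$ makes $\kappa(x;p)$ dense. A point $p\in X$ is a non-block point if some family of subcontinua of $X-\{p\}$ has nonempty intersection and dense union in $X$. *)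

From HB Require Import structures.
From mathcomp Require Import all_boot all_order.
From mathcomp Require Import generic_quotient.
From mathcomp Require Import all_classical topology.
Set Implicit Arguments. Unset Strict Implicit. Unset Printing Implicit Defensive.
Local Open Scope classical_set_scope.

Section Continua.
Context {X : topologicalType}.

Definition continuum_space : Prop :=
  [/\ compact [set: X], hausdorff_space X, connected [set: X]
    & exists x y : X, x <> y].

(* a subcontinuum: a subset which is a continuum in the subspace topology
   (Hausdorffness is inherited); nondegenerate as in the paper's convention *)
Definition subcontinuum (M : set X) : Prop :=
  [/\ compact M, connected M & exists a b, [/\ M a, M b & a <> b]].

Definition kappa (x p : X) : set X :=
  [set y | exists M : set X,
     [/\ subcontinuum M, M <> [set: X], M x, ~ M p & M y]].

Definition coastal : Prop :=
  forall x : X, exists p : X, p <> x /\ dense (kappa x p).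

Definition non_block_point (p : X) : Prop :=
  exists F : set (set X),
    [/\ (forall M, F M -> subcontinuum M /\ ~ M p),
        \bigcap_(M in F) M !=set0
      & dense (\bigcup_(M in F) M)].

Definition bloom_rel (K : set X) : rel X :=
  fun x y => `[< x = y \/ (K x /\ K y) >].

Lemma bloom_rel_refl (K : set X) : reflexive (bloom_rel K).
Proof. by move=> x; apply/asboolP; left. Qed.

Lemma bloom_rel_sym (K : set X) : symmetric (bloom_rel K).
Proof.
move=> x y; apply/idP/idP => /asboolP [->|[? ?]]; apply/asboolP; by [left|right].
Qed.

Lemma bloom_rel_trans (K : set X) : transitive (bloom_rel K).
Proof.
move=> y x z /asboolP Hxy /asboolP Hyz; apply/asboolP.
case: Hxy => [->|[Kx Ky]]; first by [].
by case: Hyz => [<-|[_ Kz]]; right.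
Qed.

Definition bloom_equiv (K : set X) : equiv_rel X :=
  EquivRel (bloom_rel K) (@bloom_rel_refl K) (@bloom_rel_sym K)
    (@bloom_rel_trans K).

Definition bloom_space (K : set X) : topologicalType :=
  quotient_topology {eq_quot (bloom_equiv K)}%qT.
End Continua.

Arguments continuum_space X : clear implicits.
Arguments coastal X : clear implicits.

Definition bloom_class (P : topologicalType -> Prop) : Prop :=
  forall (X : topologicalType), P X ->
  forall K : set X, subcontinuum K -> continuum_space (bloom_space K) ->
  P (bloom_space K).

(* Suppose a proper subcontinuum K contains every non-block point, and let
   q : X -> X/K be the K-bloom, [K] the point q K. X/K is again in the class,
   hence coastal: for some p' <> [K] the set kappa([K]; p') is dense.
   Preimages of the subcontinua of X/K that contain [K] but not p' are
   subcontinua of X, since q is closed and its only nontrivial fibre K is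
   connected; they all contain K and miss any lift p of p'. Their union is
   dense: an open set meeting K meets it, and an open set missing K is
   saturated, so its image is open and meets kappa([K]; p'). Hence p is a
   non-block point outside K, a contradiction. *)

From HB Require Import structures.
From mathcomp Require Import all_boot all_order.
From mathcomp Require Import generic_quotient.
From mathcomp Require Import all_classical topology.
Set Implicit Arguments.
Unset Strict Implicit.
Unset Printing Implicit Defensive.
Local Open Scope classical_set_scope.
Local Open Scope quotient_scope.

Section general_topology.
Context {T : topologicalType}.
Implicit Types A B : set T.

Lemma closed_separated A B :
  closed A -> closed B -> A `&` B = set0 -> separated A B.
Proof.
by move=> cA cB AB; rewrite /separated -(proj1 (closure_id A) cA)
  -(proj1 (closure_id B) cB).
Qed.

Lemma separated_closed A B : closed (A `|` B) -> separated A B -> closed A.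
Proof.
move=> cAB [clAB _] x clAx.
have [//|Bx] : (A `|` B) x by apply: cAB; apply: closureS clAx; left.
by have : (closure A `&` B) x by []; rewrite clAB.
Qed.

Lemma compact_separate_closed A B : hausdorff_space T -> compact [set: T] ->
  closed A -> closed B -> A `&` B = set0 ->
  exists U V, [/\ open U, open V, A `<=` U, B `<=` V & U `&` V = set0].
Proof.
move=> hT cT cA cB AB.
have nbhsA : set_nbhs A (~` B).
  apply/set_nbhsP; exists (~` B); split => //; first exact: closed_openC.
  by move=> x Ax Bx; have : (A `&` B) x by []; rewrite AB.
have [V nbhsV clVB] := compact_normal hT cT cA nbhsA.
have [U [oU AU UV]] := (set_nbhsP A V).1 nbhsV.
exists U, (~` closure V); split => //.
- exact/closed_openC/closed_closure.
- by move=> x Bx clVx; exact: clVB clVx Bx.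
- by apply/seteqP; split => // x [Ux]; apply; exact/subset_closure/UV.
Qed.

Lemma dense_subset A B : A `<=` B -> dense A -> dense B.
Proof.
move=> AB dA O O0 oO; have [x [Ox Ax]] := dA O O0 oO.
by exists x; split => //; exact: AB.
Qed.

End general_topology.

Section bloom.
Context {X : topologicalType} (K : set X).
Local Notation Q := (bloom_space K).
Local Notation q := (\pi_Q : X -> Q).

Lemma bloom_eqE x y : q x = q y <-> x = y \/ K x /\ K y.
Proof. by split => [/eqquotP/asboolP | xy]; last apply/eqquotP/asboolP. Qed.

Lemma bloom_continuous : continuous q.
Proof. exact: pi_continuous. Qed.

Lemma bloom_surjective : q @` [set: X] = [set: Q].
Proof.
by apply/seteqP; split => // z _; exists (repr z) => //; exact: reprK.
Qed.

Definition saturated (U : set X) := forall u v, U u -> K u -> K v -> U v.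

Lemma saturated_supset U : K `<=` U -> saturated U.
Proof. by move=> KU u v _ _ /KU. Qed.

Lemma saturated_disjoint U : U `&` K = set0 -> saturated U.
Proof. by move=> UK u v Uu Ku; have : (U `&` K) u by []; rewrite UK. Qed.

Lemma preimage_image_saturated U : saturated U -> q @^-1` (q @` U) = U.
Proof.
move=> sU; apply/seteqP; split => [x [u Uu /bloom_eqE [<-//|[Ku Kx]]]|x Ux].
  exact: sU Uu Ku Kx.
by exists x.
Qed.

Lemma open_image_saturated U : saturated U -> open U -> open (q @` U).
Proof.
move=> sU oU; change (open (q @^-1` (q @` U))).
by rewrite preimage_image_saturated.
Qed.

Lemma image_saturated_disjoint U V : saturated U -> saturated V ->
  U `&` V = set0 -> q @` U `&` q @` V = set0.
Proof.
move=> sU sV UV; apply/seteqP; split => // z [Uz Vz].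
have : (q @^-1` (q @` U) `&` q @^-1` (q @` V)) (repr z).
  by rewrite /preimage /= reprK.
by rewrite !preimage_image_saturated // UV.
Qed.

Lemma closed_fiber x : closed K -> accessible_space X ->
  closed [set y | q y = q x].
Proof.
move=> cK aX; have [Kx|Kx] := pselect (K x).
  suff -> : [set y | q y = q x] = K by [].
  apply/seteqP; split => y; first by move=> /bloom_eqE [->|[]].
  by move=> Ky; apply/bloom_eqE; right.
suff -> : [set y | q y = q x] = [set x] by exact: accessible_closed_set1.
apply/seteqP; split => y; last by move=> ->.
by move=> /bloom_eqE [//|[]].
Qed.

Lemma open_saturated_nbhs U x : closed K -> open U ->
  [set y | q y = q x] `<=` U ->
  exists2 W, [/\ open W, saturated W & W x] & W `<=` U.
Proof.
move=> cK oU xU; have [Kx|Kx] := pselect (K x).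
  exists U => //; split => //; last exact: xU.
  by apply: saturated_supset => y Ky; apply: xU; apply/bloom_eqE; right.
exists (U `&` ~` K); last by move=> ? [].
split; [exact/openI/closed_openC | | by split => //; exact: xU].
by apply: saturated_disjoint; rewrite -setIA setICl setI0.
Qed.

Lemma bloom_hausdorff : compact [set: X] -> hausdorff_space X -> closed K ->
  hausdorff_space Q.
Proof.
move=> cX hX cK; rewrite open_hausdorff => a b /eqP ab.
have aX := hausdorff_accessible hX.
have fiber_ab :
    [set y | q y = q (repr a)] `&` [set y | q y = q (repr b)] = set0.
  by apply/seteqP; split => // x /= [->]; rewrite !reprK.
have [U [V [oU oV aU bV UV]]] := compact_separate_closed hX cX
  (closed_fiber cK aX) (closed_fiber cK aX) fiber_ab.
have [U' [oU' sU' U'a] U'U] := open_saturated_nbhs cK oU aU.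
have [V' [oV' sV' V'b] V'V] := open_saturated_nbhs cK oV bV.
exists (q @` U', q @` V').
  by split; rewrite inE; [exists (repr a) | exists (repr b)]; rewrite ?reprK.
split; [exact: open_image_saturated | exact: open_image_saturated |].
apply/eqP/image_saturated_disjoint => //.
by apply/seteqP; split => // x [/U'U Ux /V'V Vx]; rewrite -UV.
Qed.

Lemma bloom_continuum p : continuum_space X -> subcontinuum K -> ~ K p ->
  continuum_space Q.
Proof.
move=> [cX hX cnX _] [cK _ [k [_ [Kk _ _]]]] Kp.
have qC : {within [set: X], continuous q}.
  exact/continuous_subspaceT/bloom_continuous.
rewrite /continuum_space -bloom_surjective; split.
- exact: continuous_compact.
- exact: bloom_hausdorff (compact_closed hX cK).
- exact: connected_continuous_connected.
- by exists (q k), (q p) => /bloom_eqE [kp|[]//]; apply: Kp; rewrite -kp.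
Qed.

Lemma subcontinuum_bloom_preimage k (N : set Q) : compact [set: X] ->
  hausdorff_space Q -> subcontinuum K -> K k ->
  subcontinuum N -> N (q k) -> subcontinuum (q @^-1` N).
Proof.
move=> cX hQ [_ cnK [k1 [k2 [Kk1 Kk2 k12]]]] Kk [cN cnN _] Nk.
have KN : K `<=` q @^-1` N.
  move=> x Kx; have qxk : q x = q k by apply/bloom_eqE; right.
  by rewrite /preimage /= qxk.
have cS : closed (q @^-1` N).
  apply: preimage_closed (compact_closed hQ cN) => x _; exact: bloom_continuous.
split; last by exists k1, k2; split => //; exact: KN.
  exact: subclosed_compact cS cX _.
apply/connectedP => E [E0 SE sepE].
have cE b : closed (E b).
  case: b; last by apply: separated_closed sepE; rewrite -SE.
  rewrite separatedC in sepE.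
  by apply: separated_closed sepE; rewrite setUC -SE.
have EE := separated_disjoint sepE.
have KEE : K `<=` E false `|` E true by rewrite -SE.
(* K is connected, so it lies in one piece: both pieces are saturated. *)
have sE b : saturated (E b).
  have [KE|KE] := connected_subset sepE KEE cnK; case: b.
  - apply: saturated_disjoint; apply/seteqP; split => // x [Etx /KE Efx].
    by rewrite -EE.
  - exact: saturated_supset.
  - exact: saturated_supset.
  - apply: saturated_disjoint; apply/seteqP; split => // x [Efx /KE Etx].
    by rewrite -EE.
have cqE b : closed (q @` E b).
  apply/(compact_closed hQ)/continuous_compact.
    exact/continuous_subspaceT/bloom_continuous.
  exact: subclosed_compact (cE b) cX _.
apply: ((connectedP N).1 cnN (fun b => q @` E b)); split.
- by move=> c; have [x Ex] := E0 c; exists (q x), x.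
- by rewrite -image_setU -SE image_preimage // bloom_surjective.
- by apply: closed_separated => //; exact: image_saturated_disjoint.
Qed.

Lemma dense_bloom_preimage (S : set Q) : dense S -> dense (K `|` q @^-1` S).
Proof.
move=> dS O [o Oo] oO.
have [[x [Ox Kx]]|/nonemptyPn/saturated_disjoint sO] :=
  pselect (O `&` K !=set0); first by exists x; split => //; left.
have [_ [[x Ox <-] Sx]] := dS _ (image_nonempty q (ex_intro _ o Oo))
  (open_image_saturated sO oO).
by exists x; split => //; right.
Qed.

Lemma bloom_non_block_point k p : compact [set: X] -> hausdorff_space Q ->
  subcontinuum K -> K k -> dense (kappa (q k) (q p)) -> non_block_point p.
Proof.
move=> cX hQ sK Kk dk.
exists [set q @^-1` N |
  N in [set N | [/\ subcontinuum N, N (q k) & ~ N (q p)]]]; split.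
- move=> _ [N [sN Nk Np] <-]; split => //.
  exact: subcontinuum_bloom_preimage sN Nk.
- by exists k => _ [N [_ Nk _] <-].
apply: dense_subset (dense_bloom_preimage dk) => x [Kx|[N [sN _ Nk Np Nx]]].
  have [_ [_ [N [sN _ Nk Np _]]]] := dk _ (ex_intro _ (q k) I) openT.
  have qxk : q x = q k by apply/bloom_eqE; right.
  by exists (q @^-1` N); [exists N | rewrite /preimage /= qxk].
by exists (q @^-1` N); first exists N.
Qed.

End bloom.

Theorem mainTheorem13 (P : topologicalType -> Prop) :
  (forall X : topologicalType, P X -> continuum_space X) ->
  bloom_class P ->
  (forall X : topologicalType, P X -> coastal X) ->
  forall X : topologicalType, P X ->
  forall M : set X, subcontinuum M ->
  (forall p : X, non_block_point p -> M p) ->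
  M = [set: X].
Proof.
move=> Pcont Pbloom Pcoastal X PX M sM Mnb.
have [cX _ _ _] := Pcont X PX.
have [_ _ [m [_ [Mm _ _]]]] := sM.
apply/seteqP; split => // p0 _; apply: contrapT => Mp0.
have Qcont := bloom_continuum (Pcont X PX) sM Mp0.
have [_ hQ _ _] := Qcont.
have [p' [p'm dense_kappa]] :=
  Pcoastal _ (Pbloom X PX M sM Qcont) (\pi_(bloom_space M) m).
have Mp : M (repr p').
  by apply/Mnb/(bloom_non_block_point cX hQ sM Mm); rewrite reprK.
by apply: p'm; rewrite -[p']reprK; apply/bloom_eqE; right.
Qed.
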